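(* Let $(L,\wedge,\vee,0,1)$ and $(L',\wedge',\vee',0',1')$ be bounded lattices. Their additive Nakano mosaics $(L,\boxplus,0)$ and $(L',\boxplus',0')$ are isomorphic if and only if $L$ and $L'$ are isomorphic lattices. Likewise, their multiplicative Nakano mosaics $(L,\boxdot,1)$ and $(L',\boxdot',1')$ are isomorphic if and only if $L$ and $L'$ are isomorphic lattices.
   Context: The additive Nakano mosaic of a bounded lattice $L$ is $(L,\boxplus,0)$ with $x\boxplus y:=\{z\in L\mid x\vee y=x\vee z=z\vee y\}$; the multiplicative Nakano mosaic is $(L,\boxdot,1)$ with $x\boxdot y:=\{z\in L\mid x\wedge y=x\wedge z=z\wedge y\}$. An isomorphism of mosaics $(A,\boxplus,e)\to(A',\boxplus',e')$ is a bijection $f$ with $f(e)=e'$ and $f(x\boxplus y)=f(x)\boxplus' f(y)$ for all $x,y$. *)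

From HB Require Import structures.
From mathcomp Require Import all_boot all_order.
Set Implicit Arguments. Unset Strict Implicit. Unset Printing Implicit Defensive.
Import Order.TTheory.
Local Open Scope order_scope.

(* A (multivalued) hyperoperation on T, given by its membership relation:
   hop x y z  <->  z \in x (op) y. *)
Definition hyperop (T : Type) := T -> T -> T -> Prop.

Definition nakano_add d (L : tbLatticeType d) : hyperop L :=
  fun x y z => x `|` y = x `|` z /\ x `|` z = z `|` y.

Definition nakano_mul d (L : tbLatticeType d) : hyperop L :=
  fun x y z => x `&` y = x `&` z /\ x `&` z = z `&` y.

(* Isomorphism of mosaics (A, op, e) -> (A', op', e'): a bijection f with
   f e = e' and f (x op y) = f x op' f y (equality of sets, where the left
   side is the image set of x op y under f). *)
Definition mosaic_iso (A A' : Type) (op : hyperop A) (e : A)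
  (op' : hyperop A') (e' : A') (f : A -> A') : Prop :=
  bijective f /\ f e = e' /\
  forall x y w, (exists2 z, op x y z & f z = w) <-> op' (f x) (f y) w.

Definition mosaic_isomorphic (A A' : Type) (op : hyperop A) (e : A)
  (op' : hyperop A') (e' : A') : Prop :=
  exists f : A -> A', mosaic_iso op e op' e' f.

Definition lattice_isomorphic d d' (L : tbLatticeType d) (L' : tbLatticeType d')
  : Prop :=
  exists f : L -> L', [/\ bijective f,
    (forall x y, f (x `&` y) = f x `&` f y) &
    (forall x y, f (x `|` y) = f x `|` f y)].

From HB Require Import structures.
From mathcomp Require Import all_boot all_order.
Local Open Scope order_scope.
Import Order.TTheory.

(* The diagonal x [+] x is the principal ideal of x, so a mosaic isomorphism of
   additive Nakano mosaics is an order isomorphism, hence a lattice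
   isomorphism; conversely [+] is defined from the join, which a lattice
   isomorphism preserves.  The multiplicative mosaic of L is the additive
   mosaic of the dual lattice, which gives the second equivalence. *)

Lemma mosaic_iso_bijE {A A' : Type} {op : hyperop A} {e : A}
    {op' : hyperop A'} {e' : A'} {f : A -> A'} :
  bijective f ->
  mosaic_iso op e op' e' f <->
  f e = e' /\ forall x y z, op' (f x) (f y) (f z) <-> op x y z.
Proof.
move=> f_bij; have f_inj := bij_inj f_bij; case: (f_bij) => g fK gK.
split=> [[_ [fe f_op]] | [fe f_op]].
- split=> // x y z; split=> [/f_op [z' xyz' /f_inj <-] // | xyz].
  by apply/f_op; exists z.
- do 2!split=> //; move=> x y w; split=> [[z /f_op xyz <-] // | xyw].
  by exists (g w); rewrite ?gK //; apply/f_op; rewrite gK.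
Qed.

Lemma nakano_add_diag {d} (L : tbLatticeType d) (x z : L) :
  nakano_add x x z <-> z <= x.
Proof.
rewrite /nakano_add joinxx [z `|` x]joinC.
by split=> [[/esym/join_idPl] | /join_idPl ->].
Qed.

Section NakanoAdd.
Context {d d' : Order.disp_t} (L : tbLatticeType d) (L' : tbLatticeType d').

Lemma bij_mono_lattice_isomorphic {f : L -> L'} :
  bijective f -> {mono f : x y / x <= y} -> lattice_isomorphic L L'.
Proof.
move=> f_bij f_mono; case: (f_bij) => g fK gK.
have g_mono : {mono g : x y / x <= y} by move=> x y; rewrite -f_mono !gK.
exists f; split=> // x y; apply: le_anti.
- rewrite lexI !f_mono leIl leIr -[f x `&` f y]gK f_mono lexI.
  by rewrite -[x]fK -[y]fK !g_mono !fK leIl leIr.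
- rewrite leUx !f_mono leUl leUr -[f x `|` f y]gK f_mono leUx.
  by rewrite -[x]fK -[y]fK !g_mono !fK leUl leUr.
Qed.

Lemma join_morph_mono {f : L -> L'} : injective f ->
  {morph f : x y / x `|` y} -> {mono f : x y / x <= y}.
Proof. by move=> f_inj f_join x y; rewrite !leEjoin -f_join (inj_eq f_inj). Qed.

Lemma bij_mono_bot {f : L -> L'} :
  bijective f -> {mono f : x y / x <= y} -> f \bot = \bot.
Proof.
case=> g _ gK f_mono; apply: le_anti.
by rewrite le0x -[X in _ <= X]gK f_mono le0x.
Qed.

Lemma nakano_add_isomorphicE :
  mosaic_isomorphic (@nakano_add d L) \bot (@nakano_add d' L') \bot
    <-> lattice_isomorphic L L'.
Proof.
split=> [[f f_iso] | [f [f_bij _ f_join]]].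
- have f_bij : bijective f by case: f_iso.
  have [_ f_add] := (mosaic_iso_bijE f_bij).1 f_iso.
  apply: (bij_mono_lattice_isomorphic f_bij) => x y.
  by apply/idP/idP => /nakano_add_diag/f_add/nakano_add_diag.
- have f_mono := join_morph_mono (bij_inj f_bij) f_join.
  exists f; apply/mosaic_iso_bijE => //; split; first exact: bij_mono_bot f_bij f_mono.
  move=> x y z; rewrite /nakano_add -!f_join.
  by split=> [[/(bij_inj f_bij) -> /(bij_inj f_bij) ->] | [-> ->]].
Qed.

End NakanoAdd.

Lemma lattice_isomorphic_dual {d d'} (L : tbLatticeType d) (L' : tbLatticeType d') :
  lattice_isomorphic L^d L'^d <-> lattice_isomorphic L L'.
Proof. by split=> -[f [f_bij f_meet f_join]]; exists f. Qed.

Theorem mainTheorem19 (d d' : Order.disp_t)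
  (L : tbLatticeType d) (L' : tbLatticeType d') :
  (mosaic_isomorphic (@nakano_add d L) \bot (@nakano_add d' L') \bot
     <-> lattice_isomorphic L L') /\
  (mosaic_isomorphic (@nakano_mul d L) \top (@nakano_mul d' L') \top
     <-> lattice_isomorphic L L').
Proof.
split; first exact: nakano_add_isomorphicE.
exact: iff_trans (nakano_add_isomorphicE L^d L'^d) (lattice_isomorphic_dual L L').
Qed.
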